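(* Let $a\ge b\ge1$ be integers with either $b\ge2$, or $b=1$ and $a\ge5$, and $A=\begin{pmatrix}2&-a\\-b&2\end{pmatrix}$. Let $j,k\in\mathbb Z_+$ with $j\not\equiv k \pmod 2$. Then (1) $\langle\beta_1^j,(\beta_2^k)^\vee\rangle=\langle\beta_2^k,(\beta_1^j)^\vee\rangle$; (2) if $\ell,i\in\mathbb Z_+$ with $j+k=\ell+i$, then $\langle\beta_1^j,(\beta_2^k)^\vee\rangle=\langle\beta_1^\ell,(\beta_2^i)^\vee\rangle$.
   Context: Let $\mathfrak g(A)$ have simple roots $\alpha_1,\alpha_2$, invariant form $(\alpha_1,\alpha_1)=2$, $(\alpha_2,\alpha_2)=2a/b$, $(\alpha_1,\alpha_2)=-a$, and for a real root $\beta$ let $\langle\lambda,\beta^\vee\rangle=2(\lambda,\beta)/(\beta,\beta)$. $\mathbb Z_+=\{0,1,2,\dots\}$. Define $c_0=d_0=0$, $c_1=d_1=1$, $c_{k+2}+c_k=a d_{k+1}$, $d_{k+2}+d_k=b c_{k+1}$, and $\beta_1^j=c_j\alpha_1+d_{j+1}\alpha_2$, $\beta_2^j=c_{j+1}\alpha_1+d_j\alpha_2$. *)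

From mathcomp Require Import all_boot all_order all_algebra.
Set Implicit Arguments. Unset Strict Implicit. Unset Printing Implicit Defensive.
Import Order.TTheory GRing.Theory Num.Theory.
Local Open Scope ring_scope.

(* cd_step a b n = (c_n, d_n, c_{n+1}, d_{n+1}) where
   c_0 = d_0 = 0, c_1 = d_1 = 1,
   c_{k+2} + c_k = a d_{k+1},  d_{k+2} + d_k = b c_{k+1}. *)
Fixpoint cd_step (a b : int) (n : nat) : int * int * int * int :=
  match n with
  | 0%N => (0, 0, 1, 1)
  | n'.+1 =>
      let: (c0, d0, c1, d1) := cd_step a b n' in
      (c1, d1, a * d1 - c0, b * c1 - d0)
  end.

Definition cseq (a b : int) (n : nat) : int := (cd_step a b n).1.1.1.
Definition dseq (a b : int) (n : nat) : int := (cd_step a b n).1.1.2.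

(* An element x alpha_1 + y alpha_2 of the root lattice, as the pair (x, y). *)
Definition rootv := (int * int)%type.

Definition beta1 (a b : int) (j : nat) : rootv := (cseq a b j, dseq a b j.+1).
Definition beta2 (a b : int) (j : nat) : rootv := (cseq a b j.+1, dseq a b j).

(* Invariant form: (a1,a1) = 2, (a2,a2) = 2a/b, (a1,a2) = -a. *)
Definition invform (a b : int) (u v : rootv) : rat :=
  2 * (u.1%:~R * v.1%:~R)
  + (2 * a%:~R / b%:~R) * (u.2%:~R * v.2%:~R)
  - a%:~R * (u.1%:~R * v.2%:~R + u.2%:~R * v.1%:~R).

Definition pairing (a b : int) (lam beta : rootv) : rat :=
  2 * invform a b lam beta / invform a b beta beta.

From mathcomp Require Import all_boot all_order all_algebra ring.
Set Implicit Arguments.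
Unset Strict Implicit.
Unset Printing Implicit Defensive.
Import Order.TTheory GRing.Theory Num.Theory.
Local Open Scope ring_scope.

(* The roots are generated by alternating simple reflections:
   beta_2^(n+1) = s_1 beta_1^n and beta_1^(n+1) = s_2 beta_2^n.  The
   reflections are isometries of the invariant form, so the squared length
   of beta_1^n, beta_2^n depends only on the parity of n, which gives (1),
   and (beta_1^(l+2), beta_2^i) = (beta_1^l, beta_2^(i+2)).  Hence
   <beta_1^l, (beta_2^i)^vee> depends only on l + i and on the parity of l.
   The two parity classes are reduced to l = 0 and l = 1, where the pairings
   are 2 d_n - b c_(n+1) and 2 c_n - a d_(n+1) (n = l + i odd); these agree
   because c_n = d_n for n odd and b c_n = a d_n for n even. *)

Section RootStrings.

Variables a b : int.

Local Notation c := (cseq a b).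
Local Notation d := (dseq a b).

Lemma cd_stepE n : cd_step a b n = (c n, d n, c n.+1, d n.+1).
Proof. by elim: n => // n; rewrite /cseq /dseq /= => ->. Qed.

Lemma cseqSS n : c n.+2 = a * d n.+1 - c n.
Proof. by rewrite {1}/cseq /= cd_stepE. Qed.

Lemma dseqSS n : d n.+2 = b * c n.+1 - d n.
Proof. by rewrite {1}/dseq /= cd_stepE. Qed.

Lemma cseq_dseq_parity n :
  (odd n -> c n = d n) /\ (~~ odd n -> b * c n = a * d n).
Proof.
elim/ltn_ind: n => -[|[|n]] IH //.
  by split=> // _; rewrite /cseq /dseq /= !mulr0.
have [odd_n even_n] := IH n (leqW (ltnSn n)).
have [odd_n1 even_n1] := IH n.+1 (ltnSn _).
rewrite cseqSS dseqSS /=; split=> /negPn n_parity.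
  by rewrite odd_n // even_n1 //= n_parity.
by rewrite -odd_n1 /= ?n_parity // !mulrBr mulrCA even_n ?n_parity.
Qed.

(* [b] times the invariant form, which is integral. *)
Definition bform (u v : rootv) : int :=
  2 * b * (u.1 * v.1) + 2 * a * (u.2 * v.2) - a * b * (u.1 * v.2 + u.2 * v.1).

Definition refl1 (u : rootv) : rootv := (a * u.2 - u.1, u.2).
Definition refl2 (u : rootv) : rootv := (u.1, b * u.1 - u.2).

Lemma bformC u v : bform u v = bform v u.
Proof. by rewrite /bform; ring. Qed.

Lemma bform_refl1 u v : bform (refl1 u) v = bform u (refl1 v).
Proof. by rewrite /bform /refl1 /=; ring. Qed.

Lemma bform_refl2 u v : bform (refl2 u) v = bform u (refl2 v).
Proof. by rewrite /bform /refl2 /=; ring. Qed.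

Lemma refl1K : involutive refl1.
Proof. by case=> x y; rewrite /refl1 /= opprB addrC subrK. Qed.

Lemma refl2K : involutive refl2.
Proof. by case=> x y; rewrite /refl2 /= opprB addrC subrK. Qed.

Lemma beta1S n : beta1 a b n.+1 = refl2 (beta2 a b n).
Proof. by rewrite /beta1 /beta2 /refl2 /= dseqSS. Qed.

Lemma beta2S n : beta2 a b n.+1 = refl1 (beta1 a b n).
Proof. by rewrite /beta1 /beta2 /refl1 /= cseqSS. Qed.

Lemma beta1_0 : beta1 a b 0 = (0, 1).
Proof. by []. Qed.

Lemma beta2_0 : beta2 a b 0 = (1, 0).
Proof. by []. Qed.

Lemma bform_beta_norm n :
  bform (beta1 a b n) (beta1 a b n) = (if odd n then 2 * b else 2 * a)
  /\ bform (beta2 a b n) (beta2 a b n) = (if odd n then 2 * a else 2 * b).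
Proof.
elim: n => [|n [norm1 norm2]].
  by rewrite beta1_0 beta2_0 /bform /=; split; ring.
rewrite beta1S beta2S bform_refl1 bform_refl2 refl1K refl2K norm1 norm2 /=.
by case: (odd n).
Qed.

Lemma bform_beta_shift2 l i :
  bform (beta1 a b l.+2) (beta2 a b i) = bform (beta1 a b l) (beta2 a b i.+2).
Proof.
by rewrite beta1S bform_refl2 -beta1S beta2S bform_refl1 -beta2S.
Qed.

Lemma bform_beta1_0 n :
  bform (beta1 a b 0) (beta2 a b n) = a * (2 * d n - b * c n.+1).
Proof. by rewrite beta1_0 /bform /=; ring. Qed.

Lemma bform_beta1_1 n :
  bform (beta1 a b 1) (beta2 a b n) = b * (2 * c n.+1 - a * d n.+2).
Proof. by rewrite beta1S bform_refl2 -beta1S beta2_0 /bform /=; ring. Qed.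

Hypothesis b_neq0 : b != 0.

Lemma invformE u v : invform a b u v = (bform u v)%:~R / b%:~R.
Proof.
have b_neq0' : b%:~R != 0 :> rat by rewrite intr_eq0.
by rewrite /invform /bform !(intrD, intrM, intrB) /=; field.
Qed.

Lemma pairingE u v : pairing a b u v = 2 * (bform u v)%:~R / (bform v v)%:~R.
Proof.
have b_neq0' : b%:~R != 0 :> rat by rewrite intr_eq0.
by rewrite /pairing !invformE invfM invrK [_^-1 * _]mulrC !mulrA divfK.
Qed.

Lemma pairingC u v : bform u u = bform v v -> pairing a b u v = pairing a b v u.
Proof. by move=> norm_eq; rewrite !pairingE bformC norm_eq. Qed.

Lemma pairing_eq (k x : int) u v : k != 0 ->
  bform v v = 2 * k -> bform u v = k * x -> pairing a b u v = x%:~R.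
Proof.
move=> k_neq0 norm_v uv; rewrite pairingE norm_v uv !intrM.
by field; rewrite intr_eq0.
Qed.

Lemma pairing_beta_shift2 l i :
  pairing a b (beta1 a b l.+2) (beta2 a b i)
  = pairing a b (beta1 a b l) (beta2 a b i.+2).
Proof.
rewrite !pairingE bform_beta_shift2.
by rewrite (bform_beta_norm i).2 (bform_beta_norm i.+2).2 /= negbK.
Qed.

Hypothesis a_neq0 : a != 0.

Lemma pairing_beta l i : odd (l + i) ->
  pairing a b (beta1 a b l) (beta2 a b i)
  = (2 * d (l + i) - b * c (l + i).+1)%:~R.
Proof.
elim/ltn_ind: l i => -[|[|l]] IH i odd_li.
- rewrite add0n in odd_li *; apply: (pairing_eq a_neq0 _ (bform_beta1_0 i)).
  by rewrite (bform_beta_norm i).2 odd_li.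
- rewrite add1n /= in odd_li *; rename odd_li into i_even.
  have -> : 2 * d i.+1 - b * c i.+2 = 2 * c i.+1 - a * d i.+2.
    have [odd_n1 _] := cseq_dseq_parity i.+1.
    have [_ even_n2] := cseq_dseq_parity i.+2.
    by rewrite odd_n1 ?even_n2 //= i_even.
  apply: (pairing_eq b_neq0 _ (bform_beta1_1 i)).
  by rewrite (bform_beta_norm i).2 (negbTE i_even).
- by rewrite pairing_beta_shift2 !addSnnS in odd_li *; apply: IH.
Qed.

End RootStrings.

Theorem lemma3p9 (a b : nat) (j k : nat) :
  (1 <= b)%N -> (b <= a)%N ->
  ((2 <= b)%N \/ (b = 1%N /\ (5 <= a)%N)) ->
  odd j != odd k ->
  pairing a b (beta1 a b j) (beta2 a b k) = pairing a b (beta2 a b k) (beta1 a b j)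
  /\ (forall l i : nat, (j + k = l + i)%N ->
        pairing a b (beta1 a b j) (beta2 a b k) = pairing a b (beta1 a b l) (beta2 a b i)).
Proof.
move=> b_ge1 le_ba _ jk_parity.
have b_neq0 : b%:Z != 0 by rewrite eqz_nat -lt0n.
have a_neq0 : a%:Z != 0 by rewrite eqz_nat -lt0n (leq_trans b_ge1 le_ba).
split.
  apply: pairingC => //.
  rewrite (bform_beta_norm _ _ j).1 (bform_beta_norm _ _ k).2.
  by move: jk_parity; case: (odd j); case: (odd k).
have odd_jk : odd (j + k).
  by rewrite oddD; move: jk_parity; case: (odd j); case: (odd k).
by move=> l i e; rewrite !pairing_beta // -?e.
Qed.
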